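(* Let $\{x^k\}_k$, $\{z^k\}_k$ be generated by the normal map-based stochastic proximal gradient method described in the context. Then for all integers $0\le m<n$ and every sample $\omega$ with $L(\omega)<\infty$ (for $L(\omega)=\infty$ the right-hand sides below are interpreted as $+\infty$), \[ d_{m,n}\le\max_{m<i\le n}\|z^i-z^m\|\le(1+\tau_{m,n}\bar\tau_{m,n})\big[\tau_{m,n}\|F^\lambda_{\mathrm{nor}}(z^m)\|+s_{m,n}\big], \] \[ \|e^{m,n}\|\le\bar\tau_{m,n}\tau_{m,n}^2\|F^\lambda_{\mathrm{nor}}(z^m)\|+(1+\bar\tau_{m,n}\tau_{m,n})s_{m,n}. \]
   Context: Let $\varphi:\mathbb{R}^d\to(-\infty,\infty]$ be convex, lower semicontinuous and proper, let $f:\mathbb{R}^d\to\mathbb{R}$ be continuously differentiable on an open set containing $\mathrm{dom}\,\varphi$, and set $\psi=f+\varphi$. For $\lambda>0$ let $\mathrm{prox}_{\lambda\varphi}(x)=\operatorname{argmin}_y\{\varphi(y)+\frac{1}{2\lambda}\|x-y\|^2\}$, $\mathrm{env}_{\lambda\varphi}(x)=\min_y\{\varphi(y)+\frac1{2\lambda}\|x-y\|^2\}$ (so $\nabla\mathrm{env}_{\lambda\varphi}(x)=(x-\mathrm{prox}_{\lambda\varphi}(x))/\lambda$), and define the normal map $F^\lambda_{\mathrm{nor}}(z)=\nabla f(\mathrm{prox}_{\lambda\varphi}(z))+\frac1\lambda(z-\mathrm{prox}_{\lambda\varphi}(z))$. Method: on a filtered probability space $(\Omega,\mathcal F,\{\mathcal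 F_k\}_k,\mathbb P)$, with $\lambda>0$, step sizes $\{\alpha_k\}_k\subset(0,\infty)$, deterministic $z^0$, $x^0=\mathrm{prox}_{\lambda\varphi}(z^0)$, and $\mathcal F_{k+1}$-measurable random vectors $g^k$, set $z^{k+1}=z^k-\alpha_k(g^k+\nabla\mathrm{env}_{\lambda\varphi}(z^k))$, $x^{k+1}=\mathrm{prox}_{\lambda\varphi}(z^{k+1})$, $k=0,1,\dots$. Let $e^k=g^k-\nabla f(x^k)$. Trajectory Lipschitz modulus: $L(\omega)=\sup_{\bar x\in\mathrm{cl}(\mathrm{conv}\{x^k(\omega)\}_k)}\mathrm{lip}\,\nabla f(\bar x)$, where $\mathrm{lip}\,\nabla f(\bar x)=\limsup_{x,x'\to\bar x,\,x\ne x'}\|\nabla f(x)-\nabla f(x')\|/\|x-x'\|$. Notation: $\tau_{m,n}=\sum_{i=m}^{n-1}\alpha_i$; $\bar\tau_{m,n}=(L+\frac2\lambda)\exp((L+\frac2\lambda)\tau_{m,n})$; $s_{m,n}=\max_{m<j\le n}\|\sum_{i=m}^{j-1}\alpha_ie^i\|$; $d_{m,n}=\max_{m<i\le n}\|x^i-x^m\|$; $e^{m,n}=-\sum_{i=m}^{n-1}\alpha_i[F^\lambda_{\mathrm{nor}}(z^i)-F^\lambda_{\mathrm{nor}}(z^m)]-\sum_{i=m}^{n-1}\alpha_ie^i$ (so that $z^n=z^m-\tau_{m,n}F^\lambda_{\mathrm{nor}}(z^m)+e^{m,n}$). *)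

From mathcomp Require Import all_boot all_order all_algebra.
From mathcomp Require Import all_classical all_reals all_analysis.
Set Implicit Arguments. Unset Strict Implicit. Unset Printing Implicit Defensive.
Import Order.TTheory GRing.Theory Num.Theory.
Local Open Scope ring_scope.
Local Open Scope classical_set_scope.

Section Defs.
Variables (R : realType) (d : nat).
Notation V := 'rV[R]_d.

Definition dotv (u v : V) : R := \sum_(i < d) u ord0 i * v ord0 i.
Definition enorm (v : V) : R := Num.sqrt (dotv v v).

Definition domf (phi : V -> \bar R) : set V := [set x | (phi x < +oo)%E].

Definition convex_efun (phi : V -> \bar R) : Prop :=
  forall (x y : V) (t : R), 0 < t < 1 ->
    (phi (t *: x + (1 - t) *: y)%R <= t%:E * phi x + (1 - t)%:E * phi y)%E.

Definition lsc_efun (phi : V -> \bar R) : Prop :=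
  forall (x : V) (a : \bar R), (a < phi x)%E ->
    exists2 eps : R, 0 < eps & forall y : V, enorm (y - x) < eps -> (a < phi y)%E.

Definition proper_efun (phi : V -> \bar R) : Prop :=
  (forall x, phi x != -oo%E) /\ exists x, (phi x < +oo)%E.

Definition open_e (U : set V) : Prop :=
  forall x, U x -> exists2 eps : R, 0 < eps & forall y, enorm (y - x) < eps -> U y.

Definition is_grad (f : V -> R) (g : V) (x : V) : Prop :=
  forall eps : R, 0 < eps -> exists2 del : R, 0 < del & forall y : V,
    enorm (y - x) < del -> `|f y - f x - dotv g (y - x)| <= eps * enorm (y - x).

Definition C1_on_open_nbhd_of_dom (f : V -> R) (gf : V -> V) (phi : V -> \bar R)
  : Prop :=
  exists U : set V, [/\ open_e U, domf phi `<=` U,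
    (forall x, U x -> is_grad f (gf x) x) &
    (forall x, U x -> forall eps : R, 0 < eps -> exists2 del : R, 0 < del &
       forall y, U y -> enorm (y - x) < del -> enorm (gf y - gf x) < eps)].

Definition is_prox (phi : V -> \bar R) (lam : R) (p : V -> V) : Prop :=
  forall x y : V,
    (phi (p x) + (enorm (x - p x) ^+ 2 / (2 * lam))%:E
       <= phi y + (enorm (x - y) ^+ 2 / (2 * lam))%:E)%E.

(* gradient of the Moreau envelope, (x - prox x)/lam *)
Definition genv (p : V -> V) (lam : R) (x : V) : V := lam^-1 *: (x - p x).

Definition Fnor (gf : V -> V) (p : V -> V) (lam : R) (z : V) : V :=
  gf (p z) + genv p lam z.

(* lip gf xb = limsup_{x,x' -> xb, x <> x'} |gf x - gf x'| / |x - x'| *)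
Definition lipg (gf : V -> V) (xb : V) : \bar R :=
  ereal_inf [set ereal_sup [set ((enorm (gf xx.1 - gf xx.2) / enorm (xx.1 - xx.2))%:E)
                           | xx in [set xx : V * V | xx.1 != xx.2 /\
                              enorm (xx.1 - xb) < del /\ enorm (xx.2 - xb) < del]]
            | del in [set del : R | 0 < del]].

Definition conv_seq (x : nat -> V) : set V :=
  [set y | exists (N : nat) (w : nat -> R),
     [/\ (forall k, 0 <= w k), \sum_(0 <= k < N) w k = 1 &
         y = \sum_(0 <= k < N) w k *: x k]].

Definition eclosure (A : set V) : set V :=
  [set y | forall eps : R, 0 < eps -> exists2 a, A a & enorm (a - y) < eps].

Definition traj_lip (gf : V -> V) (x : nat -> V) : \bar R :=
  ereal_sup [set lipg gf xb | xb in eclosure (conv_seq x)].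

Definition tau (alpha : nat -> R) (m n : nat) : R := \sum_(m <= i < n) alpha i.

Definition taubar (L lam : R) (alpha : nat -> R) (m n : nat) : R :=
  (L + 2 / lam) * expR ((L + 2 / lam) * tau alpha m n).

Definition smn (alpha : nat -> R) (e : nat -> V) (m n : nat) : R :=
  \big[Num.max/0]_(m.+1 <= j < n.+1) enorm (\sum_(m <= i < j) alpha i *: e i).

(* max_{m < i <= n} |w^i - w^m| ; d_{m,n} is this with w = x *)
Definition maxdist (w : nat -> V) (m n : nat) : R :=
  \big[Num.max/0]_(m.+1 <= i < n.+1) enorm (w i - w m).

Definition emn (F : V -> V) (alpha : nat -> R) (z e : nat -> V) (m n : nat) : V :=
  - (\sum_(m <= i < n) alpha i *: (F (z i) - F (z m)))
  - \sum_(m <= i < n) alpha i *: e i.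

End Defs.

(* The normal map F = gf o prox + (id - prox)/lam is K-Lipschitz along the
   trajectory with K = L + 2/lam: prox is nonexpansive, and gf is L-Lipschitz
   on the closed convex hull of the x^k because its local Lipschitz modulus is
   at most L there, and continuous induction along a segment turns local
   (L + eps)-Lipschitz bounds into a global one.  Unrolling the iteration gives
   z^j - z^m = -tau_{m,j} F(z^m) + e^{m,j}, hence
   ||z^j - z^m|| <= A + K sum_{m<=i<j} alpha_i ||z^i - z^m|| with
   A = tau_{m,n} ||F(z^m)|| + s_{m,n}; the discrete Gronwall inequality then
   yields ||z^j - z^m|| <= A exp(K tau_{m,n}) <= (1 + tau_{m,n} taubar_{m,n}) A,
   and inserting this bound into the definition of e^{m,n} bounds the error. *)

From mathcomp Require Import all_boot all_order all_algebra.
From mathcomp Require Import all_classical all_reals all_analysis.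
From mathcomp Require Import ring lra.
Import Order.TTheory GRing.Theory Num.Theory.
Local Open Scope ring_scope.

Set Implicit Arguments. Unset Strict Implicit.

Section EuclideanNorm.
Variables (R : realType) (d : nat).
Implicit Types u v w : 'rV[R]_d.

Lemma dotvC u v : dotv u v = dotv v u.
Proof. by apply: eq_bigr => i _; rewrite mulrC. Qed.

Lemma dotvDl u v w : dotv (u + v) w = dotv u w + dotv v w.
Proof. by rewrite /dotv -big_split; apply: eq_bigr => i _; rewrite mxE mulrDl. Qed.

Lemma dotvZl a u w : dotv (a *: u) w = a * dotv u w.
Proof. by rewrite /dotv mulr_sumr; apply: eq_bigr => i _; rewrite mxE mulrA. Qed.

Lemma dotvBl u v w : dotv (u - v) w = dotv u w - dotv v w.
Proof. by rewrite dotvDl -scaleN1r dotvZl mulN1r. Qed.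

Lemma dotvDr u v w : dotv w (u + v) = dotv w u + dotv w v.
Proof. by rewrite dotvC dotvDl !(dotvC w). Qed.

Lemma dotvZr a u w : dotv w (a *: u) = a * dotv w u.
Proof. by rewrite dotvC dotvZl dotvC. Qed.

Lemma dotvBr u v w : dotv w (u - v) = dotv w u - dotv w v.
Proof. by rewrite dotvC dotvBl !(dotvC w). Qed.

Lemma dotv0r u : dotv u 0 = 0.
Proof. by rewrite -(scale0r 0) dotvZr mul0r. Qed.

Lemma dotv_ge0 u : 0 <= dotv u u.
Proof. by apply: sumr_ge0 => i _; rewrite -expr2 sqr_ge0. Qed.

Lemma dotv_eq0 u : dotv u u = 0 -> u = 0.
Proof.
move=> u0; apply/rowP => j; rewrite mxE; apply/eqP; rewrite -sqrf_eq0 expr2.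
by apply/eqP; apply: (psumr_eq0P _ u0) => // i _; rewrite -expr2 sqr_ge0.
Qed.

Lemma enorm_ge0 u : 0 <= enorm u.
Proof. exact: sqrtr_ge0. Qed.

Lemma enorm_sqr u : enorm u ^+ 2 = dotv u u.
Proof. by rewrite sqr_sqrtr // dotv_ge0. Qed.

Lemma enorm_gt0 u : u != 0 -> 0 < enorm u.
Proof.
move=> u_neq0; rewrite sqrtr_gt0 lt_neqAle dotv_ge0 andbT eq_sym.
by apply: contra u_neq0 => /eqP/dotv_eq0 ->.
Qed.

Lemma enormZ a u : enorm (a *: u) = `|a| * enorm u.
Proof. by rewrite /enorm dotvZl dotvZr mulrA -expr2 sqrtrM ?sqr_ge0 // sqrtr_sqr. Qed.

Lemma enormN u : enorm (- u) = enorm u.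
Proof. by rewrite -scaleN1r enormZ normrN normr1 mul1r. Qed.

Lemma enorm0 : enorm (0 : 'rV[R]_d) = 0.
Proof. by rewrite -(scale0r 0) enormZ normr0 mul0r. Qed.

Lemma enorm_subZ_sqr u v t :
  enorm (u - t *: v) ^+ 2 = enorm u ^+ 2 - 2 * t * dotv u v + t ^+ 2 * enorm v ^+ 2.
Proof. by rewrite !enorm_sqr !(dotvBl, dotvBr, dotvZl, dotvZr) (dotvC v u); ring. Qed.

Lemma dotv_sqr_le u v : dotv u v ^+ 2 <= dotv u u * dotv v v.
Proof.
set a := dotv u u; set b := dotv u v; set c := dotv v v.
have [v0|c_neq0] := eqVneq c 0.
  by rewrite /b (dotv_eq0 v0) dotv0r v0 expr0n mulr0.
have c_gt0 : 0 < c by rewrite lt_neqAle eq_sym c_neq0 dotv_ge0.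
have : 0 <= dotv (c *: u - b *: v) (c *: u - b *: v) by exact: dotv_ge0.
rewrite !(dotvBl, dotvBr, dotvZl, dotvZr) (dotvC v u) -/a -/b -/c.
have -> : c * (c * a - b * b) - b * (c * b - b * c) = c * (a * c - b ^+ 2) by ring.
by rewrite pmulr_rge0 // subr_ge0.
Qed.

Lemma dotv_le u v : dotv u v <= enorm u * enorm v.
Proof.
apply: le_trans (ler_norm _) _.
rewrite /enorm -sqrtrM ?dotv_ge0 // -sqrtr_sqr ler_sqrt ?mulr_ge0 ?dotv_ge0 //.
exact: dotv_sqr_le.
Qed.

Lemma enormD u v : enorm (u + v) <= enorm u + enorm v.
Proof.
rewrite -(ler_pXn2r (isT : 0 < 2)%N) ?nnegrE ?addr_ge0 ?enorm_ge0 //.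
rewrite enorm_sqr dotvDl !dotvDr (dotvC v u) -!enorm_sqr.
have := dotv_le u v; lra.
Qed.

Lemma enorm_sum (I : Type) (r : seq I) (P : pred I) (G : I -> 'rV[R]_d) :
  enorm (\sum_(i <- r | P i) G i) <= \sum_(i <- r | P i) enorm (G i).
Proof.
elim/big_rec2: _ => [|i y1 y2 _ h]; first by rewrite enorm0.
exact: le_trans (enormD _ _) (lerD (lexx _) h).
Qed.

End EuclideanNorm.

Lemma ler0_small_mul (R : realFieldType) (c Y : R) : 0 <= Y ->
  (forall t, 0 < t < 1 -> c <= t * Y) -> c <= 0.
Proof.
move=> Y_ge0 small; rewrite leNgt; apply/negP => c_gt0.
have cY_gt0 : 0 < c + Y by rewrite ltr_wpDr.
set t := c / (2 * (c + Y)).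
have t_gt0 : 0 < t by rewrite divr_gt0 // mulr_gt0.
have t_lt1 : t < 1 by rewrite ltr_pdivrMr ?mulr_gt0 //; lra.
have := small t (andb_true_intro (conj t_gt0 t_lt1)).
rewrite /t mulrAC ler_pdivlMr ?mulr_gt0 //; nra.
Qed.

Section Prox.
Variables (R : realType) (d : nat) (phi : 'rV[R]_d -> \bar R) (lam : R).
Variable p : 'rV[R]_d -> 'rV[R]_d.
Hypotheses (phi_cvx : convex_efun phi) (phi_proper : proper_efun phi).
Hypotheses (lam_gt0 : 0 < lam) (p_prox : is_prox phi lam p).

Lemma proper_fin y : (phi y < +oo)%E -> exists r, phi y = r%:E.
Proof.
by case: phi_proper => /(_ y); case: (phi y) => [r| |] // _ _ _; exists r.
Qed.

Lemma prox_fin x : exists r, phi (p x) = r%:E.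
Proof.
apply: proper_fin; case: phi_proper => _ [y /proper_fin [b yb]].
have := p_prox x y; rewrite yb; case: (phi (p x)) => [r _| |_]; [exact: ltry | | exact: ltNye].
by rewrite /= leye_eq.
Qed.

(* The first-order optimality condition: (x - p x) / lam is a subgradient of phi at p x. *)
Lemma prox_subgrad_ineq x y a b : phi (p x) = a%:E -> phi y = b%:E ->
  lam * a + dotv (x - p x) (y - p x) <= lam * b.
Proof.
move=> pxa yb; set q := p x.
set W := enorm (x - q) ^+ 2; set D := dotv (x - q) (y - q); set Y := enorm (y - q) ^+ 2.
suff : 2 * (lam * a + D - lam * b) <= 0 by lra.
apply: (@ler0_small_mul _ _ Y); first exact: sqr_ge0.
move=> t /andP[t_gt0 t_lt1].
have cvx_t := phi_cvx y q (andb_true_intro (conj t_gt0 t_lt1)).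
have opt_t := p_prox x (t *: y + (1 - t) *: q).
rewrite yb pxa -!EFinM -EFinD in cvx_t.
have shift : x - (t *: y + (1 - t) *: q) = (x - q) - t *: (y - q).
  by apply/rowP => i; rewrite !mxE; ring.
rewrite -/q shift enorm_subZ_sqr -/W -/D -/Y pxa in opt_t.
have := le_trans opt_t (leeD2r _ cvx_t); rewrite -!EFinD lee_fin.
move/(ler_wpM2l (ltW (mulr_gt0 (ltr0Sn _ 1) lam_gt0))) => h.
have lam2_neq0 : 2 * lam != 0 by rewrite mulf_neq0 // gt_eqF.
rewrite !mulrDr ![2 * lam * (_ / _)]mulrC !divfK // in h.
have : t * (2 * (lam * a + D - lam * b)) <= t * (t * Y) by lra.
by rewrite ler_pM2l.
Qed.

Lemma prox_nonexpansive x1 x2 : enorm (p x1 - p x2) <= enorm (x1 - x2).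
Proof.
have [a1 e1] := prox_fin x1; have [a2 e2] := prox_fin x2.
have h1 := prox_subgrad_ineq e1 e2; have h2 := prox_subgrad_ineq e2 e1.
set q1 := p x1 in h1 h2 *; set q2 := p x2 in h1 h2 *.
have firm : enorm (q1 - q2) ^+ 2 <= dotv (x1 - x2) (q1 - q2).
  have : dotv (x1 - q1) (q2 - q1) + dotv (x2 - q2) (q1 - q2) =
      enorm (q1 - q2) ^+ 2 - dotv (x1 - x2) (q1 - q2).
    by rewrite enorm_sqr !(dotvBl, dotvBr) (dotvC q2 q1); ring.
  lra.
have := le_trans firm (dotv_le _ _).
have := enorm_ge0 (q1 - q2); have := enorm_ge0 (x1 - x2); nra.
Qed.

End Prox.

Lemma real_induction01 (R : realType) (P : R -> Prop) :
  (forall T : R, 0 <= T <= 1 -> (forall s, 0 <= s < T -> P s) ->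
     exists2 r : R, 0 < r & forall s, 0 <= s <= T + r -> s <= 1 -> P s) ->
  P 1.
Proof.
move=> step.
pose A T := 0 <= T <= 1 /\ forall s, 0 <= s <= T -> P s.
have A0 : A 0.
  have zero01 : 0 <= (0 : R) <= 1 by lra.
  have none_below s : 0 <= s < 0 -> P s.
    by move=> /andP[s_ge0 /(le_lt_trans s_ge0)]; rewrite ltxx.
  have [r r_gt0 Pr] := step 0 zero01 none_below.
  by split=> // s s0; apply: Pr; lra.
have supA : has_sup A by split; [exists 0 | exists 1 => T [/andP[]]].
set T := sup A.
have T01 : 0 <= T <= 1.
  by rewrite sup_upper_bound //= ge_sup //; [exists 0 | move=> ? [/andP[]]].
have below s : 0 <= s < T -> P s.
  move=> /andP[s_ge0 s_lt]; have Ts_gt0 : 0 < T - s by rewrite subr_gt0.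
  have [T' [_ PT'] sT'] := sup_adherent Ts_gt0 supA.
  by apply: PT'; rewrite s_ge0; move: sT'; rewrite -/T; lra.
have [r r_gt0 Pr] := step T T01 below.
have [Tr_le1|Tr_gt1] := lerP (T + r) 1; last by apply: Pr; lra.
have : A (T + r) by split; [lra | move=> s s_le; apply: Pr; lra].
by move/(sup_upper_bound supA); rewrite -/T; lra.
Qed.

Lemma lipschitz_on_segment (R : realType) (d : nat) (G : 'rV[R]_d -> 'rV[R]_d)
    (a b : 'rV[R]_d) (M : R) :
  (forall s, 0 <= s <= 1 -> exists2 del, 0 < del & forall y1 y2,
     enorm (y1 - (b + s *: (a - b))) < del -> enorm (y2 - (b + s *: (a - b))) < del ->
     enorm (G y1 - G y2) <= M * enorm (y1 - y2)) ->
  enorm (G a - G b) <= M * enorm (a - b).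
Proof.
move=> loc_lip.
have [->|a_neq_b] := eqVneq a b; first by rewrite !subrr enorm0 mulr0.
set N := enorm (a - b).
have N_gt0 : 0 < N by rewrite enorm_gt0 // subr_eq0.
pose c s := b + s *: (a - b).
have dist_c s s' : enorm (c s - c s') = `|s - s'| * N.
  by rewrite -enormZ; congr enorm; apply/rowP => i; rewrite !mxE; ring.
pose P s := enorm (G (c s) - G b) <= M * s * N.
have P0 : P 0 by rewrite /P /c scale0r addr0 subrr enorm0 mulr0 mul0r.
suff : P 1 by rewrite /P /c scale1r addrCA subrr addr0 mulr1.
apply: (@real_induction01 _ P) => T /andP[T_ge0 T_le1] below.
have [del del_gt0 lip_T] := loc_lip T (andb_true_intro (conj T_ge0 T_le1)).
set r := del / (2 * N).
have r_gt0 : 0 < r by rewrite divr_gt0 // mulr_gt0.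
have near_T s : `|s - T| <= r -> enorm (c s - c T) < del.
  move=> sT; rewrite dist_c; apply: le_lt_trans (ler_wpM2r (ltW N_gt0) sT) _.
  have -> : r * N = del / 2 by rewrite /r; field; rewrite gt_eqF.
  lra.
have [s0 [s0_ge0 s0_le s0_ge P_s0]] : exists s0, [/\ 0 <= s0, s0 <= T, T - r <= s0 & P s0].
  have [Tr_le0|Tr_gt0] := lerP (T - r) 0; first by exists 0; rewrite lexx.
  by exists (T - r); split; [exact: ltW | lra | lra | apply: below; lra].
exists r => // s /andP[s_ge0 s_le] _.
have [s_lt|s_ge] := ltrP s s0; first by apply: below; lra.
have sT : `|s - T| <= r by rewrite ler_norml; lra.
have s0T : `|s0 - T| <= r by rewrite ler_norml; lra.
have := lip_T _ _ (near_T s sT) (near_T s0 s0T).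
rewrite dist_c ger0_norm ?subr_ge0 // => lip_s; rewrite /P.
have -> : G (c s) - G b = (G (c s) - G (c s0)) + (G (c s0) - G b) by rewrite addrA subrK.
have -> : M * s * N = M * ((s - s0) * N) + M * s0 * N by ring.
exact: le_trans (enormD _ _) (lerD lip_s P_s0).
Qed.

Section TrajectoryLipschitz.
Variables (R : realType) (d : nat) (gf : 'rV[R]_d -> 'rV[R]_d) (x : nat -> 'rV[R]_d).
Local Notation L := (fine (traj_lip gf x)).

Lemma segment_in_hull i m s : 0 <= s <= 1 ->
  eclosure (conv_seq x) (x m + s *: (x i - x m)).
Proof.
move=> /andP[s_ge0 s_le1] eps eps_gt0.
exists (x m + s *: (x i - x m)); last by rewrite subrr enorm0.
have i_lt : (i < (maxn i m).+1)%N by rewrite ltnS leq_maxl.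
have m_lt : (m < (maxn i m).+1)%N by rewrite ltnS leq_maxr.
exists (maxn i m).+1, (fun k => (if k == i then s else 0) + (if k == m then 1 - s else 0)).
split.
- by move=> k; case: ifP; case: ifP => _ _; lra.
- by rewrite big_split /= -!big_mkcond !big_nat1_eq i_lt m_lt /=; ring.
rewrite (eq_bigr (fun k =>
  (if k == i then s *: x k else 0) + (if k == m then (1 - s) *: x k else 0))).
  rewrite big_split /= -!big_mkcond !big_nat1_eq i_lt m_lt /=.
  by apply/rowP => j; rewrite !mxE; ring.
by move=> k _; case: (k == i); case: (k == m); rewrite ?scalerDl ?scale0r.
Qed.

Lemma traj_lip_ge0 : 0 <= L.
Proof.
have [[u u_neq0]|all0] := pselect (exists u : 'rV[R]_d, u != 0); last first.
  (* Only when d = 0: no pair of distinct points exists, traj_lip is -oo and fine -oo = 0. *)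
  suff -> : traj_lip gf x = -oo%E by [].
  apply/eqP; rewrite eq_le leNye andbT; apply/ereal_supP => _ [c _ <-].
  apply: le_trans (ereal_inf_lbound _) _; first by exists 1 => //; exact: ltr01.
  apply/ereal_supP => v [[y1 y2] [/= y12 _] _]; exfalso; apply: all0.
  by exists (y1 - y2); rewrite subr_eq0.
have x0_hull : eclosure (conv_seq x) (x 0%N).
  by have := @segment_in_hull 0 0 0; rewrite scale0r addr0; apply; rewrite lexx ler01.
have lip_ge0 : (0 <= lipg gf (x 0%N))%E.
  apply/ereal_infP => _ [del /= del_gt0 <-].
  have u_gt0 := enorm_gt0 u_neq0.
  set k := del / (2 * enorm u).
  have k_gt0 : 0 < k by rewrite divr_gt0 // mulr_gt0.
  apply: le_trans (ereal_sup_ubound _); last first.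
    exists (x 0%N + k *: u, x 0%N) => //=; split.
      by rewrite -subr_eq0 addrC addKr scaler_eq0 negb_or gt_eqF.
    rewrite subrr enorm0 addrC addKr enormZ gtr0_norm // /k.
    have -> : del / (2 * enorm u) * enorm u = del / 2 by field; rewrite gt_eqF.
    by split; lra.
  by rewrite -[0%R]/(0%:E) lee_fin divr_ge0 // enorm_ge0.
apply: fine_ge0; apply: le_trans lip_ge0 _.
by apply: ereal_sup_ubound; exists (x 0%N).
Qed.

Hypothesis traj_fin : (traj_lip gf x < +oo)%E.

Lemma lipschitz_near_hull c : eclosure (conv_seq x) c -> forall eps, 0 < eps ->
  exists2 del, 0 < del & forall y1 y2, enorm (y1 - c) < del -> enorm (y2 - c) < del ->
    enorm (gf y1 - gf y2) <= (L + eps) * enorm (y1 - y2).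
Proof.
move=> hull_c eps eps_gt0.
have lip_c_le : (lipg gf c <= traj_lip gf x)%E by apply: ereal_sup_ubound; exists c.
have lip_c : (lipg gf c < (L + eps)%:E)%E.
  apply: le_lt_trans lip_c_le _.
  by move: traj_fin; case: (traj_lip gf x) => //= [r|] _; rewrite ?lte_fin ?ltNyr //; lra.
have [_ [del del_gt0 <-] sup_lt] := ereal_inf_lt lip_c.
exists del => // y1 y2 y1c y2c.
have [->|y12] := eqVneq y1 y2; first by rewrite !subrr enorm0 mulr0.
have y12_gt0 : 0 < enorm (y1 - y2) by rewrite enorm_gt0 // subr_eq0.
rewrite -ler_pdivrMr // ltW // -lte_fin.
by apply: le_lt_trans sup_lt; apply: ereal_sup_ubound; exists (y1, y2).
Qed.

Lemma traj_lipschitz i m : enorm (gf (x i) - gf (x m)) <= L * enorm (x i - x m).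
Proof.
apply/ler_addgt0Pr => eps eps_gt0.
set N := enorm (x i - x m).
have N_ge0 : 0 <= N by exact: enorm_ge0.
set eta := eps / (N + 1).
have eta_gt0 : 0 < eta by rewrite divr_gt0 // ltr_wpDl.
apply: (@le_trans _ _ ((L + eta) * N)).
  apply: lipschitz_on_segment => s s01.
  exact: lipschitz_near_hull (segment_in_hull i m s01) eta eta_gt0.
rewrite mulrDl lerD2l /eta mulrAC ler_pdivrMr ?ltr_wpDl //.
by rewrite ler_pM2l // lerDl.
Qed.

End TrajectoryLipschitz.

Section Tau.
Variables (R : realType) (alpha : nat -> R).
Hypothesis alpha_ge0 : forall k, 0 <= alpha k.

Lemma tau_ge0 m n : 0 <= tau alpha m n.
Proof. exact: sumr_ge0. Qed.

Lemma le_tau m j n : (j <= n)%N -> tau alpha m j <= tau alpha m n.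
Proof.
move=> jn; have [mj|jm] := leqP m j; last by rewrite /tau big_geq ?tau_ge0 // ltnW.
by rewrite /tau (big_cat_nat mj jn) lerDl sumr_ge0.
Qed.

Lemma discrete_gronwall (u : nat -> R) (A K : R) m n : 0 <= A -> 0 <= K ->
  (forall j, (m <= j <= n)%N -> u j <= A + K * \sum_(m <= i < j) alpha i * u i) ->
  forall j, (m <= j <= n)%N -> u j <= A * expR (K * tau alpha m j).
Proof.
move=> A_ge0 K_ge0 u_le.
pose E j := expR (K * tau alpha m j).
have telescope j : (m <= j)%N -> 1 + \sum_(m <= i < j) K * alpha i * E i <= E j.
  move=> mj; have Em : E m = 1 by rewrite /E /tau big_geq // mulr0 expR0.
  apply: (@le_trans _ _ (E m + \sum_(m <= i < j) (E i.+1 - E i))).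
    rewrite Em lerD2l; apply: ler_sum_nat => i /andP[mi _].
    rewrite {2}/E /tau big_nat_recr //= mulrDr expRD -/(tau alpha m i) -/(E i).
    have := ler_wpM2l (ltW (expR_gt0 (K * tau alpha m i))) (expR_ge1Dx (K * alpha i)).
    rewrite -/(E i); lra.
  by rewrite telescope_sumr // addrC subrK.
elim/ltn_ind => j IH jmn; have /andP[mj jn] := jmn.
apply: le_trans (u_le j jmn) _.
apply: (@le_trans _ _ (A + K * \sum_(m <= i < j) alpha i * (A * E i))).
  rewrite lerD2l ler_wpM2l // !big_nat; apply: ler_sum => i /andP[mi ij].
  by rewrite ler_wpM2l // IH // mi (leq_trans (ltnW ij) jn).
have -> : A + K * \sum_(m <= i < j) alpha i * (A * E i) =
    A * (1 + \sum_(m <= i < j) K * alpha i * E i).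
  by rewrite mulrDr mulr1 !mulr_sumr; congr (_ + _); apply: eq_bigr => i _; ring.
by rewrite ler_wpM2l // telescope.
Qed.

End Tau.

Lemma expR_le1DmulexpR (R : realType) (a : R) : expR a <= 1 + a * expR a.
Proof.
have := ler_wpM2r (ltW (expR_gt0 a)) (expR_ge1Dx (- a)).
by rewrite -expRD addNr expR0; lra.
Qed.

Lemma Fnor_lipschitz (R : realType) (d : nat) (gf p : 'rV[R]_d -> 'rV[R]_d)
    (lam L : R) (z1 z2 : 'rV[R]_d) : 0 < lam -> 0 <= L ->
  enorm (gf (p z1) - gf (p z2)) <= L * enorm (p z1 - p z2) ->
  enorm (p z1 - p z2) <= enorm (z1 - z2) ->
  enorm (Fnor gf p lam z1 - Fnor gf p lam z2) <= (L + 2 / lam) * enorm (z1 - z2).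
Proof.
move=> lam_gt0 L_ge0 gf_lip p_nonexp.
have -> : Fnor gf p lam z1 - Fnor gf p lam z2 =
    (gf (p z1) - gf (p z2)) + lam^-1 *: ((z1 - z2) - (p z1 - p z2)).
  by apply/rowP => i; rewrite !mxE; ring.
have ilam_ge0 : 0 <= lam^-1 by rewrite invr_ge0 ltW.
apply: le_trans (enormD _ _) _; rewrite enormZ ger0_norm //.
have := enormD (z1 - z2) (- (p z1 - p z2)); rewrite enormN => tri.
have := ler_wpM2l L_ge0 p_nonexp.
have := ler_wpM2l ilam_ge0 (le_trans tri (lerD (lexx _) p_nonexp)).
lra.
Qed.

Lemma enorm_partial_sum_le_smn (R : realType) (d : nat) (alpha : nat -> R)
    (e : nat -> 'rV[R]_d) m n j :
  (m <= j <= n)%N -> enorm (\sum_(m <= i < j) alpha i *: e i) <= smn alpha e m n.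
Proof.
case/andP; rewrite leq_eqVlt => /predU1P[<- _|mj jn].
  by rewrite big_geq // enorm0; apply: bigmax_ge_id.
by apply: (@bigmax_sup_seq _ _ _ _ _ j); rewrite ?mem_index_iota ?mj ?ltnS.
Qed.

Lemma le_maxdist (R : realType) (d : nat) (w w' : nat -> 'rV[R]_d) m n :
  (forall i, enorm (w i - w m) <= enorm (w' i - w' m)) ->
  maxdist w m n <= maxdist w' m n.
Proof.
move=> le_ww'; rewrite /maxdist big_seq; apply: bigmax_le; first exact: bigmax_ge_id.
by move=> i i_in; apply: (@bigmax_sup_seq _ _ _ _ _ i) (le_ww' i).
Qed.

Section PerturbedIteration.
Variables (R : realType) (d : nat) (F : 'rV[R]_d -> 'rV[R]_d) (alpha : nat -> R).
Variables (z e : nat -> 'rV[R]_d) (K : R).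
Hypotheses (alpha_ge0 : forall k, 0 <= alpha k) (K_ge0 : 0 <= K).
Hypothesis F_lip : forall i j, enorm (F (z i) - F (z j)) <= K * enorm (z i - z j).
Hypothesis z_step : forall k, z k.+1 = z k - alpha k *: (F (z k) + e k).

Lemma iterate_unroll m j : (m <= j)%N ->
  z j = z m - tau alpha m j *: F (z m) + emn F alpha z e m j.
Proof.
move=> /subnKC <-; elim: (j - m)%N => [|k IH].
  by rewrite addn0 /emn /tau !big_geq // scale0r oppr0 !addr0.
rewrite addnS z_step {1}IH /emn /tau !big_nat_recr ?leq_addr //=.
move: (\sum_(m <= i < m + k) _) (\sum_(m <= i < m + k) _ *: (_ - _)).
move: (\sum_(m <= i < m + k) _ *: e i) => S2 T S1.
by apply/rowP => i; rewrite !mxE; ring.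
Qed.

Variables m n : nat.
Let t := tau alpha m n.
Let A := t * enorm (F (z m)) + smn alpha e m n.

Let A_ge0 : 0 <= A.
Proof. by rewrite addr_ge0 ?mulr_ge0 ?tau_ge0 ?enorm_ge0 ?bigmax_ge_id. Qed.

Lemma enorm_dist_le_rec j : (m <= j <= n)%N ->
  enorm (z j - z m) <= A + K * \sum_(m <= i < j) alpha i * enorm (z i - z m).
Proof.
move=> mjn; have /andP[mj jn] := mjn.
rewrite {1}(iterate_unroll mj) /emn addrAC [X in X + _]addrAC subrr add0r.
have drift : enorm (tau alpha m j *: F (z m)) <= t * enorm (F (z m)).
  by rewrite enormZ ger0_norm ?tau_ge0 // ler_wpM2r ?enorm_ge0 ?le_tau.
have lip : enorm (\sum_(m <= i < j) alpha i *: (F (z i) - F (z m)))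
    <= K * \sum_(m <= i < j) alpha i * enorm (z i - z m).
  apply: le_trans (enorm_sum _ _ _) _; rewrite mulr_sumr; apply: ler_sum => i _.
  by rewrite enormZ ger0_norm // mulrCA ler_wpM2l.
have noise := enorm_partial_sum_le_smn alpha e mjn.
apply: le_trans (enormD _ _) _; apply: le_trans (lerD (lexx _) (enormD _ _)) _.
rewrite !enormN /A; lra.
Qed.

Lemma enorm_dist_le_exp j : (m <= j <= n)%N -> enorm (z j - z m) <= A * expR (K * t).
Proof.
move=> mjn; apply: le_trans (discrete_gronwall alpha_ge0 A_ge0 K_ge0 enorm_dist_le_rec mjn) _.
by rewrite ler_wpM2l // ler_expR ler_wpM2l // le_tau //; case/andP: mjn.
Qed.

Lemma maxdist_iterate_le : maxdist z m n <= (1 + t * (K * expR (K * t))) * A.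
Proof.
have E_ge0 : 0 <= K * expR (K * t) by rewrite mulr_ge0 // ltW ?expR_gt0.
rewrite /maxdist big_seq; apply: bigmax_le => [|j].
  by rewrite mulr_ge0 // addr_ge0 // mulr_ge0 ?tau_ge0.
rewrite mem_index_iota => /andP[mj jn].
apply: le_trans (enorm_dist_le_exp _) _; first by rewrite ltnW.
by rewrite mulrC ler_wpM2r // mulrA [t * K]mulrC expR_le1DmulexpR.
Qed.

Hypothesis mn : (m <= n)%N.

Lemma enorm_emn_le : enorm (emn F alpha z e m n) <=
  K * expR (K * t) * t ^+ 2 * enorm (F (z m)) + (1 + K * expR (K * t) * t) * smn alpha e m n.
Proof.
set E := expR (K * t).
have lip : enorm (\sum_(m <= i < n) alpha i *: (F (z i) - F (z m))) <= K * E * t * A.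
  apply: le_trans (enorm_sum _ _ _) _.
  have -> : K * E * t * A = \sum_(m <= i < n) alpha i * (K * (A * E)).
    by rewrite -mulr_suml -/(tau alpha m n) -/t; ring.
  rewrite big_seq [X in _ <= X]big_seq; apply: ler_sum => i.
  rewrite mem_index_iota => /andP[mi ni].
  rewrite enormZ ger0_norm //; apply: ler_wpM2l => //; apply: le_trans (F_lip i m) _.
  by apply: ler_wpM2l => //; apply: enorm_dist_le_exp; rewrite mi ltnW.
have noise := enorm_partial_sum_le_smn alpha e (andb_true_intro (conj mn (leqnn n))).
apply: le_trans (enormD _ _) _; rewrite !enormN.
suff -> : K * E * t ^+ 2 * enorm (F (z m)) + (1 + K * E * t) * smn alpha e m n =
    K * E * t * A + smn alpha e m n by exact: lerD.
by rewrite /A; ring.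
Qed.

End PerturbedIteration.

Theorem lemma2p7 (R : realType) (d : nat)
  (phi : 'rV[R]_d -> \bar R) (f : 'rV[R]_d -> R) (gf : 'rV[R]_d -> 'rV[R]_d)
  (lam : R) (p : 'rV[R]_d -> 'rV[R]_d) (alpha : nat -> R)
  (g z : nat -> 'rV[R]_d) :
  convex_efun phi -> lsc_efun phi -> proper_efun phi ->
  C1_on_open_nbhd_of_dom f gf phi ->
  0 < lam -> is_prox phi lam p ->
  (forall k, 0 < alpha k) ->
  (forall k, z k.+1 = z k - alpha k *: (g k + genv p lam (z k))) ->
  let x := fun k => p (z k) in
  let e := fun k => g k - gf (x k) in
  let F := Fnor gf p lam in
  (traj_lip gf x < +oo)%E ->
  let L := fine (traj_lip gf x) in
  forall m n : nat, (m < n)%N ->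
  let t := tau alpha m n in
  let tb := taubar L lam alpha m n in
  let s := smn alpha e m n in
  [/\ maxdist x m n <= maxdist z m n,
      maxdist z m n <= (1 + t * tb) * (t * enorm (F (z m)) + s) &
      enorm (emn F alpha z e m n) <= tb * t ^+ 2 * enorm (F (z m)) + (1 + tb * t) * s].
Proof.
move=> phi_cvx _ phi_proper _ lam_gt0 p_prox alpha_gt0 z_step x e F L_fin L m n mn t tb s.
have alpha_ge0 k : 0 <= alpha k by exact: ltW.
have p_nonexp i j : enorm (x i - x j) <= enorm (z i - z j).
  exact: prox_nonexpansive phi_cvx phi_proper lam_gt0 p_prox _ _.
have L_ge0 : 0 <= L by exact: traj_lip_ge0.
have K_ge0 : 0 <= L + 2 / lam by rewrite addr_ge0 // divr_ge0 // ltW.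
have F_lip i j : enorm (F (z i) - F (z j)) <= (L + 2 / lam) * enorm (z i - z j).
  exact: Fnor_lipschitz lam_gt0 L_ge0 (traj_lipschitz L_fin i j) (p_nonexp i j).
have F_step k : z k.+1 = z k - alpha k *: (F (z k) + e k).
  by rewrite z_step; congr (_ - _ *: _); rewrite /F /Fnor /e [RHS]addrC addrA subrK.
split.
- exact: le_maxdist.
- exact: maxdist_iterate_le alpha_ge0 K_ge0 F_lip F_step m n.
- exact: (enorm_emn_le alpha_ge0 K_ge0 F_lip F_step (ltnW mn)).
Qed.
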